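(* For all integers $0\le k\le n$ and all $x$, the Euler polynomials satisfy \[ \sum_{j=0}^{n-k}\binom{n-k}{j}(-1)^{j}E_{j+k}(x)=(-1)^{n+k+1}\sum_{j=0}^{k}\binom{k}{j}E_{n-j}(x)+2x^{k}(1-x)^{n-k}. \]
   Context: The Euler polynomials are defined by $\sum_{n\ge0}E_n(x)\frac{t^n}{n!}=\frac{2e^{xt}}{e^t+1}$. *)

From HB Require Import structures.
From mathcomp Require Import all_boot all_order all_algebra.
Set Implicit Arguments. Unset Strict Implicit. Unset Printing Implicit Defensive.
Import Order.TTheory GRing.Theory Num.Theory.
Local Open Scope ring_scope.

(* The defining identity
     sum_n E_n(x) t^n/n! = 2 e^{xt} / (e^t + 1)
   is, coefficientwise in t (multiply both sides by e^t + 1 and compare the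
   coefficient of t^n/n!), equivalent to
     E_n + sum_{k=0}^{n} C(n,k) E_k = 2 X^n   for all n,
   i.e.  E_n = X^n - 1/2 * sum_{k<n} C(n,k) E_k. *)
Fixpoint euler_seq (R : numFieldType) (n : nat) : seq {poly R} :=
  match n with
  | 0 => [:: 1]
  | n'.+1 =>
      let s := euler_seq R n' in
      rcons s ('X^n - 2^-1 *: \sum_(k < n) ('C(n, k))%:R *: s`_k)
  end.

Definition euler (R : numFieldType) (n : nat) : {poly R} := (euler_seq R n)`_n.

From HB Require Import structures.
From mathcomp Require Import all_boot all_order all_algebra.

Set Implicit Arguments.
Unset Strict Implicit.
Unset Printing Implicit Defensive.
Import Order.TTheory GRing.Theory Num.Theory.
Local Open Scope ring_scope.

(* Let L be the umbral evaluation, the linear form on polynomials sending X^i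
   to E_i(x).  The recurrence defining the Euler polynomials reads
   L(X^n) + L((X+1)^n) = 2 x^n, so by linearity L(q) + L(q(X+1)) = 2 q(x) for
   every polynomial q.  For q = X^k (1-X)^(n-k), L(q) is the left-hand side of
   the theorem, while q(X+1) = (-X)^(n-k) (X+1)^k produces the sum on the
   right. *)

Section EulerRecurrence.
Variable R : numFieldType.

Lemma size_euler_seq n : size (euler_seq R n) = n.+1.
Proof. by elim: n => //= n IHn; rewrite size_rcons IHn. Qed.

Lemma nth_euler_seq n k : (k <= n)%N -> (euler_seq R n)`_k = euler R k.
Proof.
elim: n k => [|n IHn] k; first by rewrite leqn0 => /eqP ->.
rewrite leq_eqVlt => /predU1P[-> //|lt_kn].
by rewrite /= nth_rcons size_euler_seq lt_kn IHn.
Qed.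

Lemma eulerS n :
  euler R n.+1 = 'X^(n.+1) - 2^-1 *: \sum_(k < n.+1) 'C(n.+1, k)%:R *: euler R k.
Proof.
rewrite /euler /= nth_rcons size_euler_seq ltnn eqxx.
by congr (_ - _ *: _); apply: eq_bigr => k _; rewrite nth_euler_seq // -ltnS.
Qed.

(* Coefficientwise form of 2 e^(xt) = (e^t + 1) * sum_n E_n(x) t^n / n!. *)
Lemma euler_add_binomial_sum n :
  euler R n + \sum_(k < n.+1) 'C(n, k)%:R *: euler R k = 2%:R *: 'X^n.
Proof.
rewrite big_ord_recr /= binn scale1r addrA.
case: n => [|n]; first by rewrite big_ord0 addr0 expr0 scaler_nat /euler.
have half_twice : (2^-1 : R) *+ 2 = 1.
  by rewrite -[RHS](@mulVf _ 2) ?pnatr_eq0 // mulr_natr.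
rewrite eulerS [RHS]scaler_nat addrAC -mulr2n mulrnBl scalerMnl half_twice.
by rewrite scale1r subrK.
Qed.

Lemma horner_euler_add_binomial_sum (x : R) n :
  (euler R n).[x] + \sum_(k < n.+1) 'C(n, k)%:R * (euler R k).[x] = 2 * x ^+ n.
Proof.
have := congr1 (horner^~ x) (euler_add_binomial_sum n).
rewrite hornerD horner_sum hornerZ hornerXn mulr_natl => <-.
by congr (_ + _); apply: eq_bigr => k _; rewrite hornerZ.
Qed.

End EulerRecurrence.

Section Umbra.
Variables (R : comNzRingType) (a : nat -> R).

Definition umbra (p : {poly R}) : R := \sum_(i < size p) p`_i * a i.

Lemma umbra_wide n (p : {poly R}) :
  (size p <= n)%N -> umbra p = \sum_(i < n) p`_i * a i.
Proof.
move=> le_p_n; rewrite /umbra (big_ord_widen _ (fun i => p`_i * a i) le_p_n).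
rewrite big_mkcond /=; apply: eq_bigr => i _; case: ltnP => // le_p_i.
by rewrite nth_default ?mul0r.
Qed.

Lemma umbraD (p q : {poly R}) : umbra (p + q) = umbra p + umbra q.
Proof.
pose n := maxn (size p) (size q).
rewrite !(@umbra_wide n) ?leq_maxl ?leq_maxr ?(leq_trans (size_polyD _ _)) //.
by rewrite -big_split; apply: eq_bigr => i _; rewrite coefD mulrDl.
Qed.

Lemma umbraZ c (p : {poly R}) : umbra (c *: p) = c * umbra p.
Proof.
rewrite (@umbra_wide (size p)) ?size_scale_leq // mulr_sumr.
by apply: eq_bigr => i _; rewrite coefZ mulrA.
Qed.

Lemma umbra_sum (I : Type) (r : seq I) (P : pred I) (F : I -> {poly R}) :
  umbra (\sum_(i <- r | P i) F i) = \sum_(i <- r | P i) umbra (F i).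
Proof.
have umbra0 : umbra 0 = 0 by rewrite /umbra size_poly0 big_ord0.
exact: (big_morph umbra umbraD umbra0).
Qed.

Lemma umbraXn n : umbra 'X^n = a n.
Proof.
rewrite /umbra size_polyXn big_ord_recr /= coefXn eqxx mul1r big1 ?add0r //.
by move=> i _; rewrite coefXn ltn_eqF ?mul0r.
Qed.

Lemma umbra_scaleXn_sum (I : Type) (r : seq I) (P : pred I)
    (c : I -> R) (d : I -> nat) :
  umbra (\sum_(i <- r | P i) c i *: 'X^(d i)) = \sum_(i <- r | P i) c i * a (d i).
Proof. by rewrite umbra_sum; apply: eq_bigr => i _; rewrite umbraZ umbraXn. Qed.

Lemma umbra_shift (y : R) :
  (forall n, a n + \sum_(i < n.+1) 'C(n, i)%:R * a i = 2 * y ^+ n) ->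
  forall q : {poly R}, umbra q + umbra (q \Po ('X + 1)) = 2 * q.[y].
Proof.
move=> a_rec q; have shiftXn n : umbra 'X^n + umbra (('X + 1) ^+ n) = 2 * y ^+ n.
  rewrite -a_rec umbraXn (addrC 'X) exprDn umbra_sum; congr (_ + _).
  by apply: eq_bigr => i _; rewrite expr1n mul1r -scaler_nat umbraZ umbraXn.
rewrite -{1}(comp_polyXr q) !comp_polyE horner_coef !umbra_sum.
rewrite -big_split mulr_sumr /=; apply: eq_bigr => i _.
by rewrite !umbraZ -mulrDr shiftXn mulrCA.
Qed.

End Umbra.

Section BinomialExpansions.
Variable R : comNzRingType.

Lemma Xn_mul_1subX_exp k m :
  'X^k * (1 - 'X) ^+ m
  = \sum_(j < m.+1) ('C(m, j)%:R * (-1) ^+ j) *: 'X^(j + k) :> {poly R}.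
Proof.
rewrite exprDn mulr_sumr; apply: eq_bigr => j _.
rewrite expr1n mul1r (exprNn 'X) exprD -mulr_natl -mul_polyC.
by rewrite rmorphM rmorph_nat rmorphXn rmorphN1 [LHS]mulrC -!mulrA.
Qed.

Lemma Xn_mul_1subX_exp_shift k m :
  ('X^k * (1 - 'X) ^+ m) \Po ('X + 1)
  = \sum_(j < k.+1) ((-1) ^+ m * 'C(k, j)%:R) *: 'X^(m + k - j) :> {poly R}.
Proof.
rewrite rmorphM !rmorphXn rmorphB /= comp_polyX comp_polyC polyC1.
rewrite opprD addrCA subrr addr0 exprDn mulr_suml; apply: eq_bigr => j _.
rewrite -(addnBA m (_ : j <= k)%N); last by rewrite -ltnS.
rewrite exprD expr1n mulr1 (exprNn 'X) -mulr_natl -mul_polyC.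
rewrite rmorphM rmorph_nat rmorphXn rmorphN1.
by rewrite mulrACA (mulrC 'C(k, j)%:R) (mulrC 'X^(k - j)).
Qed.

End BinomialExpansions.

Theorem mainTheorem5 (R : numFieldType) (n k : nat) (x : R) :
  (k <= n)%N ->
  \sum_(j < (n - k).+1) ('C(n - k, j))%:R * (-1) ^+ j * (euler R (j + k)).[x]
  = (-1) ^+ (n + k + 1) * \sum_(j < k.+1) ('C(k, j))%:R * (euler R (n - j)).[x]
    + 2 * x ^+ k * (1 - x) ^+ (n - k).
Proof.
move=> le_kn; set m := (n - k)%N; have def_n : (m + k)%N = n by rewrite subnK.
have := umbra_shift (horner_euler_add_binomial_sum x) ('X^k * (1 - 'X) ^+ m).
rewrite hornerM hornerXn horner_exp hornerD hornerN hornerC hornerX.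
rewrite Xn_mul_1subX_exp_shift Xn_mul_1subX_exp def_n !umbra_scaleXn_sum.
under [X in _ + X]eq_bigr do rewrite -mulrA.
rewrite -mulr_sumr => sum_eq.
have sign_eq : (-1) ^+ (n + k + 1) = - (-1) ^+ m :> R.
  by rewrite -def_n -signr_odd !oddD addbK signr_addb mulrN1 signr_odd.
by rewrite sign_eq -mulrA -sum_eq mulNr addrCA addNr addr0.
Qed.
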